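(* Let $p\in(\tfrac12,1)$, $n\ge1$, $B\in\{1,\dots,n\}$. For $\lambda\in[0,1]$ let $\sigma^\lambda$ be the symmetric strategy profile of the crowdfunding game $\Gamma(B,n)$ in which every player plays action $1$ with probability $1$ after signal $H$ and with probability $\lambda$ after signal $L$. For a fixed player $i$, let $x^\lambda=\Pr_{\sigma^\lambda}(\sum_{j\ne i}a_j\ge B-1\mid\omega=H)$ and $y^\lambda=\Pr_{\sigma^\lambda}(\sum_{j\ne i}a_j\ge B-1\mid\omega=L)$. If $(1-p)x^{\lambda'}-py^{\lambda'}=0$ for some $\lambda'\in(0,1)$, then $(1-p)x^{\lambda}-py^{\lambda}>0$ for all $\lambda\in[0,\lambda')$ and $(1-p)x^{\lambda}-py^{\lambda}<0$ for all $\lambda\in(\lambda',1]$.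
   Context: The crowdfunding game $\Gamma(B,n)$ with parameter $p\in(\tfrac12,1)$: there are $n$ players and a threshold $B\in\{1,\dots,n\}$. A state $\omega\in\{H,L\}$ is drawn with probability $\tfrac12$ each. Conditional on $\omega$, each player $i$ independently receives a signal $s_i\in\{H,L\}$ with $\Pr(s_i=\omega\mid\omega)=p$. Players simultaneously choose $a_i\in\{0,1\}$. Under a profile where each player independently plays $1$ with the stated signal-dependent probabilities, conditional on $\omega$ the other players' actions are i.i.d.; in particular under $\sigma^\lambda$, conditional on $\omega=H$ each other player plays $1$ with probability $p+(1-p)\lambda$, and conditional on $\omega=L$ with probability $(1-p)+p\lambda$. *)

From HB Require Import structures.
From mathcomp Require Import all_boot all_order all_algebra.
From mathcomp Require Import reals.
Set Implicit Arguments. Unset Strict Implicit. Unset Printing Implicit Defensive.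
Import Order.TTheory GRing.Theory Num.Theory.
Local Open Scope ring_scope.

(* Pr(Bin(m, q) >= k): probability that at least k of m i.i.d. players,
   each playing 1 with probability q, play 1. *)
Definition binom_tail (R : realType) (m k : nat) (q : R) : R :=
  \sum_(k <= j < m.+1) ('C(m, j))%:R * q ^+ j * (1 - q) ^+ (m - j).

(* Under sigma^lambda, conditional on omega = H each other player plays 1
   w.p. p + (1-p) lambda; there are n-1 other players; threshold B-1. *)
Definition xlam (R : realType) (p : R) (n B : nat) (lam : R) : R :=
  binom_tail (n - 1) (B - 1) (p + (1 - p) * lam).

(* conditional on omega = L: each other player plays 1 w.p. (1-p) + p lambda *)
Definition ylam (R : realType) (p : R) (n B : nat) (lam : R) : R :=
  binom_tail (n - 1) (B - 1) ((1 - p) + p * lam).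

From HB Require Import structures.
From mathcomp Require Import all_boot all_order all_algebra.
From mathcomp Require Import reals.
From mathcomp Require Import ring lra zify.
From mathcomp Require Import normedtype derive realfun.
Import Order.TTheory GRing.Theory Num.Theory.
Import numFieldNormedType.Exports.
Set Implicit Arguments. Unset Strict Implicit. Unset Printing Implicit Defensive.
Local Open Scope ring_scope.

(* Write F(q) = Pr(Bin(m, q) >= k), a = p + (1 - p) lam and b = (1 - p) + p lam,
   so that x = F(a), y = F(b) and b <= a.  Since (1 - p) x - p y vanishes at lam',
   its sign is that of F(a)/F(b) minus the value of this ratio at lam', and it
   suffices that lam |-> F(a)/F(b) is strictly decreasing on [0, 1].  The derivative of F is
   F'(q) = m Pr(Bin(m - 1, q) = k - 1) (the sum defining F' telescopes), so the
   derivative of the ratio has the sign of (1 - p) F'(a) F(b) - p F'(b) F(a).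
   The monotone likelihood ratio of the binomial family gives
   F'(a) F(b) <= F'(b) F(a) for b <= a, and 1 - p < p makes the sign negative. *)

Section BinomialTail.
Context {R : realType}.
Implicit Types (q a b : R) (m k i j : nat).

Definition binom_pmf m i q : R := 'C(m, i)%:R * q ^+ i * (1 - q) ^+ (m - i).

Definition binom_tail_poly m k : {poly R} :=
  \sum_(k <= j < m.+1) 'C(m, j)%:R *: ('X^j * (1 - 'X) ^+ (m - j)).

Lemma horner_binom_tail_poly m k q : (binom_tail_poly m k).[q] = binom_tail m k q.
Proof.
rewrite /binom_tail_poly horner_sum; apply: eq_bigr => j _.
by rewrite hornerZ hornerM hornerXn horner_exp !hornerE.
Qed.

Lemma deriv_binom_term m j q : (0 < j <= m)%N ->
  ('C(m, j)%:R *: ('X^j * (1 - 'X) ^+ (m - j)) : {poly R})^`().[q] =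
  m%:R * (binom_pmf m.-1 j.-1 q - binom_pmf m.-1 j q).
Proof.
move=> /andP[j0 jm].
rewrite derivZ derivM derivXn deriv_exp derivB derivC derivX sub0r.
have e1 : (m * 'C(m.-1, j.-1) = j * 'C(m, j))%N by rewrite mul_bin_diag prednK.
have e2 : (m * 'C(m.-1, j) = (m - j) * 'C(m, j))%N.
  by rewrite mul_bin_diag mul_bin_left.
rewrite hornerZ !hornerE /binom_pmf mulrBr !mulrA -!natrM e1 e2 !natrM.
have -> : (m.-1 - j.-1 = m - j)%N by lia.
have -> : (m.-1 - j = (m - j).-1)%N by lia.
case: (m - j)%N => [|t];
  rewrite !hornerMn !hornerM !hornerXn !horner_exp !hornerE /=; ring.
Qed.

Lemma deriv_binom_tail_poly m k q : (0 < k <= m)%N ->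
  (binom_tail_poly m k)^`().[q] = m%:R * binom_pmf m.-1 k.-1 q.
Proof.
move=> /andP[k0 km].
rewrite /binom_tail_poly raddf_sum horner_sum.
rewrite (@telescope_sumr_eq _ _ _ (fun i => - (m%:R * binom_pmf m.-1 i.-1 q))).
- by rewrite /= {1}/binom_pmf bin_small ?mul0r ?mulr0 ?oppr0 ?sub0r ?opprK //; lia.
- by lia.
move=> j /andP[kj jm]; rewrite deriv_binom_term /=; last by lia.
by rewrite opprK addrC mulrDr mulrN.
Qed.

Lemma horner_binom_tail_affine m k (u v : R) q :
  (binom_tail_poly m k \Po (u%:P + v *: 'X)).[q] = binom_tail m k (u + v * q).
Proof. by rewrite horner_comp horner_binom_tail_poly !hornerE. Qed.

Lemma deriv_binom_tail_affine m k (u v : R) q : (0 < k <= m)%N ->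
  (binom_tail_poly m k \Po (u%:P + v *: 'X))^`().[q] =
  m%:R * binom_pmf m.-1 k.-1 (u + v * q) * v.
Proof.
move=> kmb; rewrite deriv_comp hornerM horner_comp deriv_binom_tail_poly //.
rewrite derivD derivC derivZ derivX add0r hornerZ !hornerD !hornerC.
by rewrite hornerZ hornerX mulr1.
Qed.

Lemma binom_tail0 m q : binom_tail m 0 q = 1.
Proof.
have := exprDn (1 - q) q m; rewrite subrK expr1n => ->.
rewrite /binom_tail big_mkord; apply: eq_bigr => j _.
by rewrite -mulr_natl; ring.
Qed.

Lemma binom_tail_gt0 m k q : (k <= m)%N -> 0 < q -> q <= 1 -> 0 < binom_tail m k q.
Proof.
move=> km q0 q1; rewrite /binom_tail big_nat_recr //=.
rewrite subnn expr0 mulr1 binn mul1r ltr_wpDl ?exprn_gt0 //.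
by apply: sumr_ge0 => j _; rewrite !mulr_ge0 ?exprn_ge0 ?ler0n ?subr_ge0 ?(ltW q0).
Qed.

Lemma binom_pmf_gt0 m i q : (i <= m)%N -> 0 < q -> q < 1 -> 0 < binom_pmf m i q.
Proof.
move=> im q0 q1.
by rewrite /binom_pmf !mulr_gt0 ?exprn_gt0 ?subr_gt0 // ltr0n bin_gt0.
Qed.

Lemma expr_likelihood_ratio_le a b d : 0 <= b -> b <= a -> a <= 1 ->
  b ^+ d.+1 * (1 - a) ^+ d <= a ^+ d.+1 * (1 - b) ^+ d.
Proof.
move=> b0 ba a1.
by rewrite ler_pM ?exprn_ge0 ?subr_ge0 ?lerXn2r ?lerB ?nnegrE ?subr_ge0
  ?(le_trans b0 ba) ?(le_trans ba a1).
Qed.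

Lemma binom_pmf_tail_le m k a b : (0 < k <= m)%N ->
  0 <= b -> b <= a -> a <= 1 ->
  binom_pmf m.-1 k.-1 a * binom_tail m k b <=
  binom_pmf m.-1 k.-1 b * binom_tail m k a.
Proof.
move=> /andP[k0 km] b0 ba a1.
rewrite /binom_tail !big_distrr /=; apply: ler_sum_nat => j /andP[kj jm].
have ej : j = (k.-1 + (j - k).+1)%N by lia.
have em : (m.-1 - k.-1 = (m - j) + (j - k))%N by lia.
rewrite /binom_pmf em; move: (m - j)%N (j - k)%N ej => s d ej.
rewrite ej !exprD.
set c := 'C(m.-1, k.-1)%:R * 'C(m, k.-1 + d.+1)%:R * a ^+ k.-1 * b ^+ k.-1 *
  (1 - a) ^+ s * (1 - b) ^+ s.
have c0 : 0 <= c.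
  by rewrite /c !mulr_ge0 ?ler0n ?exprn_ge0 ?subr_ge0 ?(le_trans b0 ba)
    ?(le_trans ba a1).
have := ler_wpM2l c0 (expr_likelihood_ratio_le d b0 ba a1).
by rewrite /c; congr (_ <= _); ring.
Qed.
End BinomialTail.

Section HornerRatio.
Context {R : realType}.
Implicit Types (P Q : {poly R}) (x a b : R).

Lemma is_derive_horner_div P Q x : Q.[x] != 0 ->
  is_derive x 1 (fun z => P.[z] / Q.[z])
    ((P^`().[x] * Q.[x] - P.[x] * Q^`().[x]) / Q.[x] ^+ 2).
Proof.
move=> Qx0.
have := is_deriveM (is_derive_poly P x) (is_deriveV Qx0 (is_derive_poly Q x)).
suff -> : (P^`().[x] * Q.[x] - P.[x] * Q^`().[x]) / Q.[x] ^+ 2 =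
  P.[x] *: (- Q.[x] ^- 2 *: Q^`().[x]) + Q.[x]^-1 *: P^`().[x] by [].
by rewrite /GRing.scale /=; field.
Qed.

Lemma horner_div_decreasing P Q a b :
  {in `[a, b], forall x, Q.[x] != 0} ->
  {in `]a, b[, forall x, P^`().[x] * Q.[x] - P.[x] * Q^`().[x] < 0} ->
  {in `[a, b] &, {homo (fun z => P.[z] / Q.[z]) : x y /~ x < y}}.
Proof.
move=> Q0 dPQ.
have Dab x : x \in `[a, b] -> derivable (fun z => P.[z] / Q.[z]) x 1.
  by move=> /Q0 /(is_derive_horner_div P) /@ex_derive.
apply: ltr0_derive1_lt_cc.
- by move=> x /subset_itv_oo_cc /Dab.
- move=> x xab; have Qx0 := Q0 x (subset_itv_oo_cc xab).
  have D := is_derive_horner_div P Qx0.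
  by rewrite derive1E derive_val pmulr_llt0 ?dPQ // invr_gt0 exprn_even_gt0.
- by apply: derivable_within_continuous => x /Dab.
Qed.
End HornerRatio.

Lemma binom_pmf_tail_lt (R : realType) (p a b : R) m k : (0 < k <= m)%N ->
  p <= 1 -> 1 - p < p -> 0 < b -> b < 1 -> b <= a -> a <= 1 ->
  (1 - p) * (binom_pmf m.-1 k.-1 a * binom_tail m k b) <
  p * (binom_pmf m.-1 k.-1 b * binom_tail m k a).
Proof.
move=> kmb p1 hp b0 b1 ba a1; have /andP[_ km] := kmb.
have km1 : (k.-1 <= m.-1)%N by rewrite -!subn1 leq_sub2r.
have pmf_tail_gt0 :=
  mulr_gt0 (binom_pmf_gt0 km1 b0 b1) (binom_tail_gt0 km (lt_le_trans b0 ba) a1).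
apply: le_lt_trans (ler_wpM2l _ (binom_pmf_tail_le kmb (ltW b0) ba a1)) _.
  by rewrite subr_ge0.
by rewrite ltr_pM2r.
Qed.

Lemma binom_tail_ratio_decreasing (R : realType) (p : R) m k :
  1 / 2 < p -> p < 1 -> (0 < k <= m)%N ->
  {in `[0, 1] &, {homo (fun lam =>
     binom_tail m k (p + (1 - p) * lam) / binom_tail m k ((1 - p) + p * lam))
     : x y /~ x < y}}.
Proof.
move=> hp1 hp2 kmb; have /andP[k0 km] := kmb.
have hpp : 1 - p < p by lra.
have m0 : 0 < m%:R :> R by rewrite ltr0n (leq_trans k0 km).
pose P : {poly R} := binom_tail_poly m k \Po (p%:P + (1 - p) *: 'X).
pose Q : {poly R} := binom_tail_poly m k \Po ((1 - p)%:P + p *: 'X).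
have Q0 : {in `[0, 1], forall z : R, Q.[z] != 0}.
  move=> z; rewrite in_itv /= horner_binom_tail_affine => /andP[z0 z1].
  by rewrite gt_eqF // binom_tail_gt0 //; nra.
have dPQ : {in `]0, 1[, forall z : R, P^`().[z] * Q.[z] - P.[z] * Q^`().[z] < 0}.
  move=> z; rewrite in_itv /= => /andP[z0 z1].
  rewrite !horner_binom_tail_affine !deriv_binom_tail_affine //.
  have b0 : 0 < (1 - p) + p * z by nra.
  have b1 : (1 - p) + p * z < 1 by nra.
  have ba : (1 - p) + p * z <= p + (1 - p) * z by nra.
  have a1 : p + (1 - p) * z <= 1 by nra.
  have := binom_pmf_tail_lt kmb (ltW hp2) hpp b0 b1 ba a1.
  by rewrite -(ltr_pM2l m0); lra.
move=> x y x01 y01 xy; rewrite -!(horner_binom_tail_affine m k).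
exact: (horner_div_decreasing Q0 dPQ).
Qed.

Lemma weighted_diff_eq (R : realFieldType) (p X Y X' Y' : R) :
  Y != 0 -> Y' != 0 -> (1 - p) * X' - p * Y' = 0 ->
  (1 - p) * X - p * Y = (1 - p) * Y * (X / Y - X' / Y').
Proof.
move=> Y0 Y'0 /eqP; rewrite subr_eq0 => /eqP e.
rewrite mulrBr; congr (_ - _); first by rewrite -mulrA [Y * _]mulrC divfK.
by rewrite mulrAC mulrA e mulfK.
Qed.

Theorem proposition1 (R : realType) (p : R) (n B : nat)
  (hp1 : 1 / 2 < p) (hp2 : p < 1)
  (hn : (1 <= n)%N) (hB1 : (1 <= B)%N) (hB2 : (B <= n)%N)
  (lam' : R) (hl1 : 0 < lam') (hl2 : lam' < 1)
  (h0 : (1 - p) * xlam p n B lam' - p * ylam p n B lam' = 0) :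
  (forall lam : R, 0 <= lam -> lam < lam' ->
     (1 - p) * xlam p n B lam - p * ylam p n B lam > 0) /\
  (forall lam : R, lam' < lam -> lam <= 1 ->
     (1 - p) * xlam p n B lam - p * ylam p n B lam < 0).
Proof.
rewrite /xlam /ylam in h0 *.
set m := (n - 1)%N in h0 *; set k := (B - 1)%N in h0 *.
have [k0|k_gt0] := posnP k.
  by move: h0; rewrite k0 !binom_tail0; lra.
have kmb : (0 < k <= m)%N by rewrite k_gt0 leq_sub2r.
have dec := binom_tail_ratio_decreasing hp1 hp2 kmb.
have tail_gt0 lam : lam \in `[0, 1] -> 0 < binom_tail m k ((1 - p) + p * lam).
  rewrite in_itv /= => /andP[l0 l1].
  by rewrite binom_tail_gt0 //; [case/andP: kmb | nra | nra].
have tail_neq0 lam (lam01 : lam \in `[0, 1]) := lt0r_neq0 (tail_gt0 lam lam01).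
have lam'01 : lam' \in `[0, 1] by rewrite in_itv /= !ltW.
split=> lam l0 l1.
- have lam01 : lam \in `[0, 1] by rewrite in_itv /= l0 ltW // (lt_trans l1).
  rewrite (weighted_diff_eq _ (tail_neq0 _ lam01) (tail_neq0 _ lam'01) h0).
  by rewrite !mulr_gt0 ?subr_gt0 ?tail_gt0 //; exact: dec.
- have lam01 : lam \in `[0, 1] by rewrite in_itv /= l1 ltW // (lt_trans hl1).
  rewrite (weighted_diff_eq _ (tail_neq0 _ lam01) (tail_neq0 _ lam'01) h0).
  by rewrite pmulr_rlt0 ?mulr_gt0 ?subr_gt0 ?tail_gt0 // subr_lt0; exact: dec.
Qed.
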